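(* Let $S_t$ be the state at time $t$ of a $d$-dimensional Hegselmann–Krause system with social network $G=(V,E)$ and confidence bound $\varepsilon>0$. Suppose agent $v$ is updated in step $t$ (so it moves by $m_v(t)$), producing the state $S_{t+1}$. Then $$\Phi(S_t)-\Phi(S_{t+1})\ \ge\ (|N_v(t)|+1)\,\|m_v(t)\|_2^2,$$ with equality if the influence network in $S_{t+1}$ equals the influence network in $S_t$.
   Context: A $d$-dimensional Hegselmann–Krause system has a finite undirected graph $G=(V,E)$ (social network), a confidence bound $\varepsilon>0$, and positions $x_v(t)\in\mathbb{R}^d$ at time $t$. The influencing neighborhood is $N_v(t)=\{u:\{u,v\}\in E,\ \|x_u(t)-x_v(t)\|_2\le\varepsilon\}\cup\{v\}$, the movement is $m_v(t)=\frac{1}{|N_v(t)|}\sum_{u\in N_v(t)}(x_u(t)-x_v(t))$, and the influence network at time $t$ is $(V,E_I(t))$ with $E_I(t)=\{\{u,v\}\in E:\|x_u(t)-x_v(t)\|_2\le\varepsilon\}$. Updating $v$ in step $t$ means $x_v(t+1)=x_v(t)+m_v(t)$ and $x_u(t+1)=x_u(t)$ for $u\ne v$. The potential of a state $S$ with positions $x$ is $\Phi(S)=\sum_{\{u,v\}\in E}\min\{\|x_u-x_v\|_2^2,\varepsilon^2\}$. *)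

From HB Require Import structures.
From mathcomp Require Import all_boot all_order all_algebra.
From mathcomp Require Import reals.
Set Implicit Arguments. Unset Strict Implicit. Unset Printing Implicit Defensive.
Import Order.TTheory GRing.Theory Num.Theory.
Local Open Scope ring_scope.

Section HK.
Variables (R : realType) (d : nat) (V : finType).

Definition norm2 (y : 'rV[R]_d) : R := Num.sqrt (\sum_(i < d) (y 0 i) ^+ 2).

Definition simple_graph (E : rel V) : Prop := symmetric E /\ irreflexive E.

Definition influence (E : rel V) (eps : R) (x : V -> 'rV[R]_d) : rel V :=
  fun u w => E u w && (norm2 (x u - x w) <= eps).

Definition nbhd (E : rel V) (eps : R) (x : V -> 'rV[R]_d) (v : V) : {set V} :=
  [set u | influence E eps x u v || (u == v)].

Definition movement (E : rel V) (eps : R) (x : V -> 'rV[R]_d) (v : V) : 'rV[R]_d :=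
  (#|nbhd E eps x v|%:R)^-1 *: \sum_(u in nbhd E eps x v) (x u - x v).

Definition update (E : rel V) (eps : R) (x : V -> 'rV[R]_d) (v : V) : V -> 'rV[R]_d :=
  fun u => if u == v then x v + movement E eps x v else x u.

(* potential: sum over unordered edges {u,w} of min(||x_u-x_w||^2, eps^2);
   since E is symmetric and irreflexive, each unordered edge is counted twice
   in the ordered double sum, hence the factor 1/2. *)
Definition potential (E : rel V) (eps : R) (x : V -> 'rV[R]_d) : R :=
  2^-1 * \sum_(u : V) \sum_(w : V | E u w)
            Num.min (norm2 (x u - x w) ^+ 2) (eps ^+ 2).

End HK.

(* Only the edges at v change.  Writing n = |N_v|, the defining identity
   n m_v = sum_(u in N_v) (x_u - x_v) turns the gains
   |x_v - x_u|^2 - |x_v + m_v - x_u|^2 = 2 <m_v, x_u - x_v> - |m_v|^2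
   summed over N_v into n |m_v|^2; the term u = v contributes -|m_v|^2, so the
   neighbours within range gain (n + 1) |m_v|^2 in total.  Truncating at eps^2
   can only increase the gain of an edge within range and leaves the gain of
   any other edge nonnegative, with equality when no edge changes status. *)

From HB Require Import structures.
From mathcomp Require Import all_boot all_order all_algebra.
From mathcomp Require Import reals.
From mathcomp Require Import ring lra.
Import Order.TTheory GRing.Theory Num.Theory.
Local Open Scope ring_scope.
Set Implicit Arguments. Unset Strict Implicit. Unset Printing Implicit Defensive.

Lemma sum_sqr_sub_mean_shift (R : comPzRingType) (I : finType) (A : {pred I})
    (c mu : R) (p : I -> R) :
  #|A|%:R * mu = \sum_(w in A) (p w - c) ->
  \sum_(w in A) ((c - p w) ^+ 2 - (c + mu - p w) ^+ 2) = #|A|%:R * mu ^+ 2.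
Proof.
move=> def_mu.
under eq_bigr => w _ do
  have -> : (c - p w) ^+ 2 - (c + mu - p w) ^+ 2 = 2 * mu * (p w - c) - mu ^+ 2
    by ring.
rewrite sumrB -mulr_sumr -def_mu sumr_const -mulr_natl; ring.
Qed.

Definition sqnorm (R : pzRingType) (d : nat) (a : 'rV[R]_d) : R :=
  \sum_(i < d) a 0 i ^+ 2.

Lemma sqnorm_ge0 (R : realDomainType) (d : nat) (a : 'rV[R]_d) : 0 <= sqnorm a.
Proof. by apply: sumr_ge0 => i _; exact: sqr_ge0. Qed.

Lemma sqnormN (R : pzRingType) (d : nat) (a : 'rV[R]_d) : sqnorm (- a) = sqnorm a.
Proof. by apply: eq_bigr => i _; rewrite mxE sqrrN. Qed.

Lemma sqnorm0 (R : pzRingType) (d : nat) : sqnorm (0 : 'rV[R]_d) = 0.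
Proof. by apply: big1 => i _; rewrite mxE expr0n. Qed.

Lemma sum_sqnorm_sub_mean_shift (R : comPzRingType) (d : nat) (I : finType)
    (A : {pred I}) (c m : 'rV[R]_d) (p : I -> 'rV[R]_d) :
  #|A|%:R *: m = \sum_(w in A) (p w - c) ->
  \sum_(w in A) (sqnorm (c - p w) - sqnorm (c + m - p w)) = #|A|%:R * sqnorm m.
Proof.
move=> def_m; rewrite /sqnorm mulr_sumr.
under eq_bigr => w _ do rewrite -sumrB.
rewrite exchange_big /=; apply: eq_bigr => i _.
under eq_bigr => w _ do rewrite !mxE.
apply: sum_sqr_sub_mean_shift.
move/(congr1 (fun M : 'rV_d => M 0 i)): def_m; rewrite !mxE summxE => ->.
by apply: eq_bigr => w _; rewrite !mxE.
Qed.

Lemma norm2_sqr (R : realType) (d : nat) (a : 'rV[R]_d) : norm2 a ^+ 2 = sqnorm a.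
Proof. by rewrite sqr_sqrtr // sqnorm_ge0. Qed.

Lemma norm2_distC (R : realType) (d : nat) (a b : 'rV[R]_d) :
  norm2 (a - b) = norm2 (b - a).
Proof. by rewrite /norm2 -opprB; congr Num.sqrt; exact: sqnormN. Qed.

Lemma norm2_le (R : realType) (d : nat) (a : 'rV[R]_d) (e : R) :
  0 <= e -> (norm2 a <= e) = (sqnorm a <= e ^+ 2).
Proof. by move=> e_ge0; rewrite -norm2_sqr ler_sqr // nnegrE sqrtr_ge0. Qed.

Lemma ler_sub_min (R : realDomainType) (a b e : R) :
  (if a <= e then a - b else 0) <= Num.min a e - Num.min b e.
Proof. by case: (leP a e) => ae; case: (leP b e) => be; lra. Qed.

Lemma sub_min_eq (R : realDomainType) (a b e : R) : (a <= e) = (b <= e) ->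
  Num.min a e - Num.min b e = if a <= e then a - b else 0.
Proof. by case: (leP a e); case: (leP b e); rewrite ?subrr. Qed.

Lemma half_edge_sum_at (R : numFieldType) (V : finType) (E : rel V)
    (f : V -> V -> R) (v : V) :
  symmetric E -> irreflexive E -> (forall u w, f u w = f w u) ->
  (forall u w, u != v -> w != v -> f u w = 0) ->
  2^-1 * \sum_u \sum_(w | E u w) f u w = \sum_(w | E v w) f v w.
Proof.
move=> Esym Eirr fsym f0.
have star u : u != v -> \sum_(w | E u w) f u w = if E v u then f v u else 0.
  move=> uv; rewrite big_mkcond (bigD1 v) //= big1 => [|w wv]; last first.
    by rewrite f0 // if_same.
  by rewrite addr0 Esym fsym.
rewrite (bigD1 v) //= (eq_bigr _ star) -big_mkcondr.
have -> : \sum_(u | (u != v) && E v u) f v u = \sum_(u | E v u) f v u.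
  by apply: eq_bigl => u; case: (eqVneq u v) => [->|]; rewrite ?Eirr ?andbT.
by rewrite mulrDr mulrC -splitr.
Qed.

Section UpdateStep.
Variables (R : realType) (d : nat) (V : finType) (E : rel V) (eps : R).
Variables (x : V -> 'rV[R]_d) (v : V).
Hypotheses (Esym : symmetric E) (Eirr : irreflexive E) (eps_ge0 : 0 <= eps).

Local Notation N := (nbhd E eps x v).
Local Notation m := (movement E eps x v).
Local Notation x' := (update E eps x v).

Lemma nbhd_self : v \in N.
Proof. by rewrite inE eqxx orbT. Qed.

Lemma scale_card_nbhd_movement : #|N|%:R *: m = \sum_(u in N) (x u - x v).
Proof.
rewrite /movement scalerA mulfV ?scale1r // pnatr_eq0 -lt0n.
by apply/card_gt0P; exists v; exact: nbhd_self.
Qed.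

Lemma update_self : x' v = x v + m.
Proof. by rewrite /update eqxx. Qed.

Lemma update_other u : u != v -> x' u = x u.
Proof. by rewrite /update => /negbTE ->. Qed.

Lemma edge_neq w : E v w -> w != v.
Proof. by apply: contraTneq => ->; rewrite Eirr. Qed.

Lemma influence_at (y : V -> 'rV[R]_d) w : E v w ->
  influence E eps y w v = (sqnorm (y v - y w) <= eps ^+ 2).
Proof. by move=> Evw; rewrite /influence Esym Evw norm2_distC norm2_le. Qed.

Lemma potential_sub_update :
  potential E eps x - potential E eps x' =
  \sum_(w | E v w) (Num.min (sqnorm (x v - x w)) (eps ^+ 2)
                    - Num.min (sqnorm (x v + m - x w)) (eps ^+ 2)).
Proof.
rewrite /potential -mulrBr -sumrB.
under eq_bigr => u _ do rewrite -sumrB.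
rewrite (half_edge_sum_at (v := v) Esym Eirr) => [|u w|u w uv wv].
- apply: eq_bigr => w /edge_neq wv.
  by rewrite update_self update_other // !norm2_sqr.
- by rewrite norm2_distC [norm2 (x' u - _)]norm2_distC.
- by rewrite !update_other // subrr.
Qed.

Lemma sum_gain_nbhd :
  \sum_(w | E v w) (if sqnorm (x v - x w) <= eps ^+ 2
                    then sqnorm (x v - x w) - sqnorm (x v + m - x w) else 0)
  = (#|N|%:R + 1) * sqnorm m.
Proof.
rewrite -big_mkcondr.
have -> : \sum_(w | E v w && (sqnorm (x v - x w) <= eps ^+ 2))
            (sqnorm (x v - x w) - sqnorm (x v + m - x w))
          = \sum_(w in N | w != v) (sqnorm (x v - x w) - sqnorm (x v + m - x w)).
  apply: eq_bigl => w; rewrite inE.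
  case: (eqVneq w v) => [->|wv]; first by rewrite Eirr orbT.
  rewrite orbF andbT; case Evw: (E v w); first by rewrite influence_at.
  by rewrite /influence Esym Evw.
have := sum_sqnorm_sub_mean_shift scale_card_nbhd_movement.
rewrite (bigD1 v) ?nbhd_self //= subrr [x v + m]addrC addrK sqnorm0.
lra.
Qed.

End UpdateStep.

Theorem lemma3 (R : realType) (d : nat) (V : finType) (E : rel V) (eps : R)
  (x : V -> 'rV[R]_d) (v : V) :
  simple_graph E -> 0 < eps ->
  (#|nbhd E eps x v|%:R + 1) * norm2 (movement E eps x v) ^+ 2
    <= potential E eps x - potential E eps (update E eps x v) /\
  (influence E eps (update E eps x v) =2 influence E eps x ->
   potential E eps x - potential E eps (update E eps x v)
     = (#|nbhd E eps x v|%:R + 1) * norm2 (movement E eps x v) ^+ 2).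
Proof.
move=> [Esym Eirr] /ltW eps_ge0.
rewrite norm2_sqr potential_sub_update // -sum_gain_nbhd //; split.
  by apply: ler_sum => w _; exact: ler_sub_min.
move=> same_influence; apply: eq_bigr => w Evw; apply: sub_min_eq.
have := same_influence w v.
by rewrite !influence_at // update_self update_other // (edge_neq Eirr Evw).
Qed.
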